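(* Let $(w_1,w_2,w_3)\in(0,\infty)^3$ with $w_1+w_2+w_3\ge2\max\{w_1,w_2,w_3\}$, and put $z_1=\frac{w_2+w_3-w_1}{2w_2}$, $z_2=\frac{w_3+w_1-w_2}{2w_3}$, $z_3=\frac{w_1+w_2-w_3}{2w_1}$, so $z_i\in[0,1]$. Let $\overrightarrow{p_1}=(1,z_1,0)$, $\overrightarrow{p_2}=(0,1,z_2)$, $\overrightarrow{p_3}=(z_3,0,1)$, and let $m_{12},m_{23},m_{31}$ be given by $$m_{12}=\frac{(1-z_1)(1-z_2)(1-z_3)-(1-z_1)(1-z_2)+(1-z_1)}{(1-z_1)(1-z_2)(1-z_3)+1},$$ $$m_{23}=\frac{(1-z_1)(1-z_2)(1-z_3)-(1-z_2)(1-z_3)+(1-z_2)}{(1-z_1)(1-z_2)(1-z_3)+1},$$ $$m_{31}=\frac{(1-z_1)(1-z_2)(1-z_3)-(1-z_3)(1-z_1)+(1-z_3)}{(1-z_1)(1-z_2)(1-z_3)+1}.$$ Then $m_{12},m_{23},m_{31}\ge0$, $m_{12}+m_{23}+m_{31}=1$, and the probability measure on $[0,1]^3$ placing mass $m_{12}$, $m_{23}$, $m_{31}$ uniformly on the segments $[\overrightarrow{p_1},\overrightarrow{p_2}]$, $[\overrightarrow{p_2},\overrightarrow{p_3}]$, $[\overrightarrow{p_3},\overrightarrow{p_1}]$ respectively has uniform$[0,1]$ marginals and is supported on the plane $w_1u_1+w_2u_2+w_3u_3=\frac{w_1+w_2+w_3}{2}$.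
   Context: ''Mass $m$ uniformly on the segment $[\overrightarrow{p},\overrightarrow{q}]$'' means the measure $m$ times the law of $t\overrightarrow{p}+(1-t)\overrightarrow{q}$ with $t$ uniform on $[0,1]$. *)

From Stdlib Require Import Reals Lra ClassicalDescription.
Open Scope R_scope.

Record pt3 := P3 { px : R; py : R; pz : R }.

Definition lerp (t : R) (p q : pt3) : pt3 :=
  P3 (t * px p + (1 - t) * px q) (t * py p + (1 - t) * py q) (t * pz p + (1 - t) * pz q).

Definition ind (P : R -> Prop) : R -> R :=
  fun t => if excluded_middle_informative (P t) then 1 else 0.

(* "the law of t p + (1-t) q, t uniform on [0,1], gives mass v to A":
   v is the Lebesgue measure of {t in [0,1] | t p + (1-t) q in A},
   computed as the (Riemann) integral over [0,1] of its indicator.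
   (Only used for sets A for which this indicator is Riemann integrable.) *)
Definition seg_law (p q : pt3) (A : pt3 -> Prop) (v : R) : Prop :=
  exists pr : Riemann_integrable (ind (fun t => A (lerp t p q))) 0 1,
    RiemannInt pr = v.

(* the measure placing masses m12, m23, m31 uniformly on the segments
   [p1,p2], [p2,p3], [p3,p1]: mu3 ... A v  means mu(A) = v *)
Definition mu3 (m12 m23 m31 : R) (p1 p2 p3 : pt3) (A : pt3 -> Prop) (v : R) : Prop :=
  exists v12 v23 v31,
    seg_law p1 p2 A v12 /\ seg_law p2 p3 A v23 /\ seg_law p3 p1 A v31 /\
    v = m12 * v12 + m23 * v23 + m31 * v31.

Definition coord (i : nat) (u : pt3) : R :=
  match i with 1%nat => px u | 2%nat => py u | _ => pz u end.

From Pilot Require Import Defs.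
From Stdlib Require Import Reals Lra Lia ClassicalDescription.
From Coquelicot Require Import Coquelicot.
Open Scope R_scope.

(* Every set whose mass we compute meets each open edge
   {t p + (1-t) q | 0 < t < 1} in an initial or final piece of the parameter
   interval, so its segment law is the integral of a two-step function.
   A coordinate (or the linear form w.u) is affine along edges:
   - w.u takes the value (w1+w2+w3)/2 at the three vertices, hence on all
     edges, and the vertices lie in the convex cube [0,1]^3: both null sets
     miss every edge;
   - the coordinate u_i runs once through [0,1] on one edge and through
     [0,z] and [z,1] on the other two (z the i-th coordinate of the third
     vertex).  The marginal is uniform as soon as the two other edge masses
     are in proportion z : 1-z, an algebraic identity on the edge masses
     that holds because (1-z1)(1-z2)(1-z3) = z1 z2 z3 for the z_i built from
     the weights. *)

Lemma RiemannInt_two_step (g : R -> R) (c A B : R) : 0 <= c <= 1 ->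
  (forall t, 0 < t < c -> g t = A) -> (forall t, c < t < 1 -> g t = B) ->
  exists pr : Riemann_integrable g 0 1, RiemannInt pr = A * c + B * (1 - c).
Proof.
  intros Hc HA HB.
  assert (H1 : is_RInt g 0 c (scal (c - 0) A)).
  { apply is_RInt_ext with (f := fun _ => A); [|exact (@is_RInt_const R_NormedModule _ _ _)].
    intros x Hx. rewrite Rmin_left in Hx by lra. rewrite Rmax_right in Hx by lra.
    symmetry; apply HA; lra. }
  assert (H2 : is_RInt g c 1 (scal (1 - c) B)).
  { apply is_RInt_ext with (f := fun _ => B); [|exact (@is_RInt_const R_NormedModule _ _ _)].
    intros x Hx. rewrite Rmin_left in Hx by lra. rewrite Rmax_right in Hx by lra.
    symmetry; apply HB; lra. }
  pose proof (is_RInt_Chasles _ _ _ _ _ _ H1 H2) as H01.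
  assert (E : ex_RInt g 0 1) by (eexists; exact H01).
  exists (ex_RInt_Reals_0 _ _ _ E).
  rewrite <- RInt_Reals, (is_RInt_unique _ _ _ _ H01).
  unfold plus, scal; simpl; unfold mult; simpl.
  change (@Hierarchy.plus R_AbelianMonoid) with Rplus. ring.
Qed.

Lemma ind_true (P : R -> Prop) (t : R) : P t -> Defs.ind P t = 1.
Proof. intros H; unfold Defs.ind; destruct (excluded_middle_informative (P t)); tauto. Qed.

Lemma ind_false (P : R -> Prop) (t : R) : ~ P t -> Defs.ind P t = 0.
Proof. intros H; unfold Defs.ind; destruct (excluded_middle_informative (P t)); tauto. Qed.

Lemma seg_law_initial (p q : pt3) (A : pt3 -> Prop) (c : R) : 0 <= c <= 1 ->
  (forall t, 0 < t < c -> A (lerp t p q)) -> (forall t, c < t < 1 -> ~ A (lerp t p q)) ->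
  seg_law p q A c.
Proof.
  intros Hc H1 H2.
  destruct (RiemannInt_two_step (Defs.ind (fun t => A (lerp t p q))) c 1 0 Hc)
    as [pr E]; [intros; apply ind_true; auto | intros; apply ind_false; auto |].
  exists pr; rewrite E; ring.
Qed.

Lemma seg_law_final (p q : pt3) (A : pt3 -> Prop) (c : R) : 0 <= c <= 1 ->
  (forall t, 0 < t < c -> ~ A (lerp t p q)) -> (forall t, c < t < 1 -> A (lerp t p q)) ->
  seg_law p q A (1 - c).
Proof.
  intros Hc H1 H2.
  destruct (RiemannInt_two_step (Defs.ind (fun t => A (lerp t p q))) c 0 1 Hc)
    as [pr E]; [intros; apply ind_false; auto | intros; apply ind_true; auto |].
  exists pr; rewrite E; ring.
Qed.

Lemma seg_law_none (p q : pt3) (A : pt3 -> Prop) :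
  (forall t, 0 < t < 1 -> ~ A (lerp t p q)) -> seg_law p q A 0.
Proof. intros H; apply seg_law_initial; [lra | intros; lra | auto]. Qed.

Lemma seg_law_all (p q : pt3) (A : pt3 -> Prop) :
  (forall t, 0 < t < 1 -> A (lerp t p q)) -> seg_law p q A 1.
Proof.
  intros H; replace 1 with (1 - 0) by ring.
  apply seg_law_final; [lra | intros; lra | auto].
Qed.

Lemma mu3_null (m12 m23 m31 : R) (p1 p2 p3 : pt3) (A : pt3 -> Prop) :
  (forall t, 0 < t < 1 -> ~ A (lerp t p1 p2)) ->
  (forall t, 0 < t < 1 -> ~ A (lerp t p2 p3)) ->
  (forall t, 0 < t < 1 -> ~ A (lerp t p3 p1)) ->
  mu3 m12 m23 m31 p1 p2 p3 A 0.
Proof.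
  intros H12 H23 H31; exists 0, 0, 0.
  repeat split; [apply seg_law_none; auto .. | ring].
Qed.

Lemma mu3_rotate (m12 m23 m31 : R) (p1 p2 p3 : pt3) (A : pt3 -> Prop) (v : R) :
  mu3 m12 m23 m31 p1 p2 p3 A v -> mu3 m31 m12 m23 p3 p1 p2 A v.
Proof.
  intros (v12 & v23 & v31 & H12 & H23 & H31 & E).
  exists v31, v12, v23; repeat split; auto; lra.
Qed.

Definition affine (F : pt3 -> R) : Prop :=
  forall t p q, F (lerp t p q) = t * F p + (1 - t) * F q.

Lemma coord_affine (i : nat) : affine (coord i).
Proof. intros t p q; destruct i as [|[|[|]]]; simpl; ring. Qed.

Lemma linear_form_affine (a b c : R) : affine (fun u => a * px u + b * py u + c * pz u).
Proof. intros t p q; simpl; ring. Qed.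

Lemma affine_constant_on_segment (F : pt3 -> R) (p q : pt3) (v t : R) :
  affine F -> F p = v -> F q = v -> F (lerp t p q) = v.
Proof. intros HF Hp Hq; rewrite HF, Hp, Hq; ring. Qed.

Lemma mu3_null_off_level (W : pt3 -> R) (v : R) (m12 m23 m31 : R) (p1 p2 p3 : pt3) :
  affine W -> W p1 = v -> W p2 = v -> W p3 = v ->
  mu3 m12 m23 m31 p1 p2 p3 (fun u => W u <> v) 0.
Proof.
  intros HW H1 H2 H3; apply mu3_null; intros t _ N; apply N;
    apply affine_constant_on_segment; auto.
Qed.

Definition in_unit_cube (u : pt3) : Prop :=
  0 <= px u <= 1 /\ 0 <= py u <= 1 /\ 0 <= pz u <= 1.

Lemma lerp_in_unit_cube (t : R) (p q : pt3) : 0 <= t <= 1 ->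
  in_unit_cube p -> in_unit_cube q -> in_unit_cube (lerp t p q).
Proof.
  intros Ht (Hpx & Hpy & Hpz) (Hqx & Hqy & Hqz).
  unfold in_unit_cube, lerp; simpl; repeat split; nra.
Qed.

Lemma mu3_null_outside_cube (m12 m23 m31 : R) (p1 p2 p3 : pt3) :
  in_unit_cube p1 -> in_unit_cube p2 -> in_unit_cube p3 ->
  mu3 m12 m23 m31 p1 p2 p3 (fun u => ~ in_unit_cube u) 0.
Proof.
  intros H1 H2 H3; apply mu3_null; intros t Ht N; apply N;
    apply lerp_in_unit_cube; auto; lra.
Qed.

(* The projection of s onto [lo,hi]; clamp lo hi s - lo is the length of
   [lo,hi] below s. *)
Definition clamp (lo hi s : R) : R := Rmax lo (Rmin hi s).

Lemma clamp_split (z s : R) : 0 <= z <= 1 -> 0 <= s <= 1 ->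
  (clamp 0 z s - 0) + (clamp z 1 s - z) = s.
Proof. intros Hz Hs; unfold clamp, Rmax, Rmin; repeat destruct Rle_dec; lra. Qed.

Lemma seg_law_uniform (F : pt3 -> R) (p q : pt3) (s : R) :
  affine F -> F p = 1 -> F q = 0 -> 0 <= s <= 1 ->
  seg_law p q (fun u => F u <= s) s.
Proof.
  intros HF Hp Hq Hs; apply seg_law_initial; auto; intros t Ht;
    rewrite HF, Hp, Hq; lra.
Qed.

Lemma seg_law_weighted (F : pt3 -> R) (p q : pt3) (s : R) :
  affine F -> F p <= F q ->
  exists v, seg_law p q (fun u => F u <= s) v /\
    (F q - F p) * v = clamp (F p) (F q) s - F p.
Proof.
  intros HF Hle.
  assert (Hseg : forall t, F (lerp t p q) = F q - t * (F q - F p))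
    by (intros t; rewrite HF; ring).
  unfold clamp, Rmax, Rmin.
  destruct (Rlt_or_le s (F p)) as [Hlo | Hlo].
  - exists 0; split; [| repeat destruct Rle_dec; lra].
    apply seg_law_none; intros t Ht; rewrite Hseg; nra.
  - destruct (Rle_or_lt (F q) s) as [Hhi | Hhi].
    + exists 1; split; [| repeat destruct Rle_dec; lra].
      apply seg_law_all; intros t Ht; rewrite Hseg; nra.
    + set (c := (F q - s) / (F q - F p)).
      assert (Hc : c * (F q - F p) = F q - s) by (unfold c; field; lra).
      assert (Hc01 : 0 <= c <= 1) by (split; nra).
      exists (1 - c); split.
      * apply seg_law_final; auto; intros t Ht; rewrite Hseg; nra.
      * repeat destruct Rle_dec; nra.
Qed.

Lemma mu3_marginal_uniform (F : pt3 -> R) (p q r : pt3) (mpq mqr mrp z s : R) :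
  affine F -> F p = 1 -> F q = 0 -> F r = z -> 0 <= z <= 1 -> 0 <= s <= 1 ->
  mqr = (1 - mpq) * z -> mrp = (1 - mpq) * (1 - z) ->
  mu3 mpq mqr mrp p q r (fun u => F u <= s) s.
Proof.
  intros HF Hp Hq Hr Hz Hs Hqr Hrp.
  destruct (seg_law_weighted F q r s HF) as (vqr & Lqr & Eqr); [lra |].
  destruct (seg_law_weighted F r p s HF) as (vrp & Lrp & Erp); [lra |].
  rewrite Hq, Hr in Eqr; rewrite Hr, Hp in Erp.
  exists s, vqr, vrp; repeat split; auto.
  - apply seg_law_uniform; auto.
  - pose proof (clamp_split z s Hz Hs); rewrite Hqr, Hrp; nra.
Qed.

(* The mass of the edge starting at the vertex with parameter a, for the
   cyclically ordered parameters a, b, c. *)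
Definition edge_mass (a b c : R) : R :=
  ((1 - a) * (1 - b) * (1 - c) - (1 - a) * (1 - b) + (1 - a)) /
  ((1 - a) * (1 - b) * (1 - c) + 1).

Lemma edge_mass_nonneg (a b c : R) :
  0 <= a <= 1 -> 0 <= b <= 1 -> 0 <= c <= 1 -> 0 <= edge_mass a b c.
Proof.
  intros Ha Hb Hc.
  assert (HP : 0 <= (1 - a) * (1 - b) * (1 - c)) by (apply Rmult_le_pos; nra).
  unfold edge_mass, Rdiv; apply Rmult_le_pos.
  - nra.
  - left; apply Rinv_0_lt_compat; lra.
Qed.

Section EdgeMasses.
Variables a b c : R.
Hypothesis hprod : (1 - a) * (1 - b) * (1 - c) = a * b * c.
Hypothesis ha : 0 <= a <= 1.
Hypothesis hb : 0 <= b <= 1.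
Hypothesis hc : 0 <= c <= 1.

Lemma edge_mass_balance :
  edge_mass b c a = (1 - edge_mass a b c) * c /\
  edge_mass c a b = (1 - edge_mass a b c) * (1 - c).
Proof.
  assert (HD : 0 < (1 - a) * (1 - b) * (1 - c) + 1)
    by (assert (0 <= (1 - a) * (1 - b) * (1 - c)) by (apply Rmult_le_pos; nra); lra).
  unfold edge_mass.
  replace ((1 - b) * (1 - c) * (1 - a)) with ((1 - a) * (1 - b) * (1 - c)) by ring.
  replace ((1 - c) * (1 - a) * (1 - b)) with ((1 - a) * (1 - b) * (1 - c)) by ring.
  split; field_simplify_eq; try lra; nra.
Qed.

Lemma edge_mass_sum : edge_mass a b c + edge_mass b c a + edge_mass c a b = 1.
Proof. destruct edge_mass_balance as [E1 E2]; rewrite E1, E2; ring. Qed.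

End EdgeMasses.

Lemma triangle_of_max (w1 w2 w3 : R) : w1 + w2 + w3 >= 2 * Rmax w1 (Rmax w2 w3) ->
  w1 <= w2 + w3 /\ w2 <= w3 + w1 /\ w3 <= w1 + w2.
Proof. unfold Rmax; repeat destruct Rle_dec; lra. Qed.

Lemma half_excess_unit (a b c : R) : 0 < b -> a <= b + c -> c <= a + b ->
  0 <= (b + c - a) / (2 * b) <= 1.
Proof.
  intros Hb Hab Hcb; split.
  - apply Rmult_le_pos; [lra | left; apply Rinv_0_lt_compat; lra].
  - apply Rmult_le_reg_r with (2 * b); [lra |].
    unfold Rdiv; rewrite Rmult_assoc, Rinv_l; lra.
Qed.

Theorem mainTheorem5 (w1 w2 w3 : R)
  (hw1 : 0 < w1) (hw2 : 0 < w2) (hw3 : 0 < w3)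
  (hmax : w1 + w2 + w3 >= 2 * Rmax w1 (Rmax w2 w3)) :
  let z1 := (w2 + w3 - w1) / (2 * w2) in
  let z2 := (w3 + w1 - w2) / (2 * w3) in
  let z3 := (w1 + w2 - w3) / (2 * w1) in
  let p1 := P3 1 z1 0 in
  let p2 := P3 0 1 z2 in
  let p3 := P3 z3 0 1 in
  let D := (1 - z1) * (1 - z2) * (1 - z3) + 1 in
  let m12 := ((1 - z1) * (1 - z2) * (1 - z3) - (1 - z1) * (1 - z2) + (1 - z1)) / D in
  let m23 := ((1 - z1) * (1 - z2) * (1 - z3) - (1 - z2) * (1 - z3) + (1 - z2)) / D in
  let m31 := ((1 - z1) * (1 - z2) * (1 - z3) - (1 - z3) * (1 - z1) + (1 - z3)) / D in
  (0 <= z1 <= 1 /\ 0 <= z2 <= 1 /\ 0 <= z3 <= 1) /\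
  (0 <= m12 /\ 0 <= m23 /\ 0 <= m31) /\
  m12 + m23 + m31 = 1 /\
  (* the measure lives on [0,1]^3 *)
  mu3 m12 m23 m31 p1 p2 p3
    (fun u => ~ (0 <= px u <= 1 /\ 0 <= py u <= 1 /\ 0 <= pz u <= 1)) 0 /\
  (* uniform[0,1] marginals: P(u_i <= s) = s for s in [0,1] *)
  (forall (i : nat) (s : R), (1 <= i <= 3)%nat -> 0 <= s <= 1 ->
     mu3 m12 m23 m31 p1 p2 p3 (fun u => coord i u <= s) s) /\
  (* supported on the plane w.u = (w1+w2+w3)/2 *)
  mu3 m12 m23 m31 p1 p2 p3
    (fun u => w1 * px u + w2 * py u + w3 * pz u <> (w1 + w2 + w3) / 2) 0.
Proof.
  intros z1 z2 z3 p1 p2 p3 D m12 m23 m31.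
  destruct (triangle_of_max w1 w2 w3 hmax) as (T1 & T2 & T3).
  assert (hz1 : 0 <= z1 <= 1) by (apply half_excess_unit; lra).
  assert (hz2 : 0 <= z2 <= 1) by (apply half_excess_unit; lra).
  assert (hz3 : 0 <= z3 <= 1) by (apply half_excess_unit; lra).
  assert (hprod : (1 - z1) * (1 - z2) * (1 - z3) = z1 * z2 * z3)
    by (unfold z1, z2, z3; field; lra).
  assert (E12 : m12 = edge_mass z1 z2 z3) by reflexivity.
  assert (E23 : m23 = edge_mass z2 z3 z1)
    by (unfold m23, D, edge_mass; f_equal; ring).
  assert (E31 : m31 = edge_mass z3 z1 z2)
    by (unfold m31, D, edge_mass; f_equal; ring).
  assert (hprod2 : (1 - z2) * (1 - z3) * (1 - z1) = z2 * z3 * z1) by lra.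
  assert (hprod3 : (1 - z3) * (1 - z1) * (1 - z2) = z3 * z1 * z2) by lra.
  rewrite E12, E23, E31.
  repeat split; try tauto; try (apply edge_mass_nonneg; auto).
  - apply edge_mass_sum; auto.
  - apply mu3_null_outside_cube; unfold in_unit_cube; simpl; lra.
  - intros i s Hi Hs.
    destruct i as [|[|[|[|i]]]]; try lia.
    + destruct (edge_mass_balance z1 z2 z3) as [B1 B2]; auto.
      apply mu3_marginal_uniform with (z := z3); auto; apply coord_affine.
    + destruct (edge_mass_balance z2 z3 z1) as [B1 B2]; auto.
      apply mu3_rotate, mu3_marginal_uniform with (z := z1); auto; apply coord_affine.
    + destruct (edge_mass_balance z3 z1 z2) as [B1 B2]; auto.
      apply mu3_rotate, mu3_rotate, mu3_marginal_uniform with (z := z2); auto;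
        apply coord_affine.
  - apply mu3_null_off_level; [apply linear_form_affine | ..];
      simpl; unfold z1, z2, z3; field; lra.
Qed.
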